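(* Let $n\ge3$, let $B$ be the ménage board and $\alpha=(\alpha_1,\dots,\alpha_\ell)$ a valid prefix with $1\le\ell<n$. Partition $[n]\setminus\{\alpha_1,\dots,\alpha_\ell\}$ into maximal sets $P_1,\dots,P_m$ of consecutive integers. Then $B_\alpha^c$ is the union of $m$ pairwise disjoint sub-boards, where the $t$-th consists of the (relabeled) squares of $B^c$ lying in columns of $P_t$ and rows $>\ell$; each of these sub-boards is staircase-shaped with exactly $\sum_{p\in P_t}c_p$ squares. Consequently the multiset of sizes of the disjoint staircase-shaped sub-boards of $B_\alpha^c$ is $\mathcal P_\alpha=\{\sum_{p\in P_t}c_p: 1\le t\le m\}$.
   Context: Ménage board $B=\{(i,j)\in[n]\times[n]: j\ne i,\ j+1\not\equiv i\pmod n\}$, with complement $B^c=\{(i,i):i\in[n]\}\cup\{(i+1,i):i\in[n-1]\}\cup\{(1,n)\}$; squares are (row, column). Valid prefix: prefix of the one-line notation of a ménage permutation ($\pi\in S_n$ with $\pi(i)\ne i$, $\pi(i)+1\not\equiv i\pmod n$). Derived board $B_\alpha$: delete rows $1,\dots,\ell$ and columns $\alpha_1,\dots,\alpha_\ell$ of $B$, relabel the rest increasingly as $1,\dots,n-\ell$; $B_\alpha^c$ = complement of $B_\alpha$ in $[n-\ell]\times[n-\ell]$ (equivalently the image of $B^c$ under the same deletion and relabeling). For $i\notin\alpha$: $c_i=0$ if $i<\ell$, $c_i=1$ if $i=\ell$ or $i=n$, $c_i=2$ if $\ell<i<n$. Disjoint sub-boards: no square of one shares a row or column with a square of another. Staircase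 shapes for $m\ge1$: $\mathcal O_{2m-1}=\{(i,i):i\in[m]\}\cup\{(i,i+1):i\in[m-1]\}$, $\mathcal O_{2m-1}^\intercal=\{(i,i):i\in[m]\}\cup\{(i+1,i):i\in[m-1]\}$, $\mathcal E_{2m-2}=\{(i,i):i\in[m-1]\}\cup\{(i+1,i):i\in[m-1]\}$, $\mathcal E_{2m-2}^\intercal=\{(i,i):i\in[m-1]\}\cup\{(i,i+1):i\in[m-1]\}$; a board is staircase-shaped if, after relabeling its occupied rows and columns increasingly as $1,2,\dots$, it equals one of these (empty board = $\mathcal E_0$). *)

From HB Require Import structures.
From mathcomp Require Import all_boot all_order.
From mathcomp Require Import finmap.

Set Implicit Arguments.
Unset Strict Implicit.
Unset Printing Implicit Defensive.

Local Open Scope fset_scope.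

(* Boards: finite sets of squares (row, column), 1-based. *)
Notation board := {fset (nat * nat)}.

Definition grid (n : nat) : board :=
  [fset x | x in [seq (i, j) | i <- iota 1 n, j <- iota 1 n]].

Definition menage_board (n : nat) : board :=
  [fset x in grid n | (x.2 != x.1) && ((x.2 + 1) %% n != x.1 %% n)].

Definition menage_compl (n : nat) : board :=
  [fset x in grid n | x \notin menage_board n].

Definition menage_perm (n : nat) (s : seq nat) : Prop :=
  perm_eq s (iota 1 n) /\
  forall i, 1 <= i <= n ->
    nth 0 s i.-1 != i /\ (nth 0 s i.-1 + 1) %% n != i %% n.

Definition valid_prefix (n : nat) (alpha : seq nat) : Prop :=
  exists s, menage_perm n s /\ alpha = take (size alpha) s.

(* Relabeling after deleting rows 1..l and columns alpha_1..alpha_l. *)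
Definition relab (alpha : seq nat) (x : nat * nat) : nat * nat :=
  (x.1 - size alpha, x.2 - count (fun a => a < x.2) alpha).

Definition derived_board (n : nat) (alpha : seq nat) : board :=
  relab alpha @` [fset x in menage_board n |
                   (size alpha < x.1) && (x.2 \notin alpha)].

Definition derived_compl (n : nat) (alpha : seq nat) : board :=
  [fset x in grid (n - size alpha) | x \notin derived_board n alpha].

Definition cw (n : nat) (alpha : seq nat) (i : nat) : nat :=
  if i < size alpha then 0
  else if (i == size alpha) || (i == n) then 1 else 2.

Definition consecutive (P : {fset nat}) : Prop :=
  forall x y z, x \in P -> y \in P -> x <= z <= y -> z \in P.

Definition free_cols (n : nat) (alpha : seq nat) : {fset nat} :=
  [fset i in iota 1 n | i \notin alpha].

Definition is_block (n : nat) (alpha : seq nat) (P : {fset nat}) : Prop :=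
  [/\ P != fset0, P `<=` free_cols n alpha, consecutive P &
      forall Q : {fset nat}, consecutive Q -> P `<=` Q ->
        Q `<=` free_cols n alpha -> Q = P].

Definition sub_board (n : nat) (alpha : seq nat) (P : {fset nat}) : board :=
  relab alpha @` [fset x in menage_compl n |
                   (size alpha < x.1) && (x.2 \in P)].

Definition disjoint_boards (S T : board) : Prop :=
  forall x y, x \in S -> y \in T -> x.1 != y.1 /\ x.2 != y.2.

(* Relabel occupied rows and columns increasingly as 1, 2, ... *)
Definition occ_rows (S : board) : seq nat :=
  sort leq (undup [seq x.1 | x <- enum_fset S]).
Definition occ_cols (S : board) : seq nat :=
  sort leq (undup [seq x.2 | x <- enum_fset S]).
Definition normalize (S : board) : board :=
  [fset ((index x.1 (occ_rows S)).+1, (index x.2 (occ_cols S)).+1) | x in S].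

Definition diag_sq (k : nat) : board := [fset ((i : nat), i) | i in iota 1 k].
Definition upper_sq (k : nat) : board := [fset ((i : nat), i.+1) | i in iota 1 k].
Definition lower_sq (k : nat) : board := [fset ((i : nat).+1, i) | i in iota 1 k].

Definition shape_O (m : nat) : board := diag_sq m `|` upper_sq m.-1.
Definition shape_OT (m : nat) : board := diag_sq m `|` lower_sq m.-1.
Definition shape_E (m : nat) : board := diag_sq m.-1 `|` lower_sq m.-1.
Definition shape_ET (m : nat) : board := diag_sq m.-1 `|` upper_sq m.-1.

Definition staircase_shaped (S : board) : Prop :=
  exists m, 1 <= m /\
    (normalize S = shape_O m \/ normalize S = shape_OT m \/
     normalize S = shape_E m \/ normalize S = shape_ET m).

From mathcomp Require Import all_boot all_order.
From mathcomp Require Import finmap.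
From mathcomp Require Import zify.

(* Below row [l], the complement [B^c] consists only of diagonal and subdiagonal squares,
   and since no deleted column lies inside a maximal run [P] of free columns, the
   relabeling translates the squares over [P] rigidly.  They therefore form a translated
   copy of one of the four staircases, its type being decided by whether [P] contains the
   columns [l] and [n], and counting its diagonal and subdiagonal squares gives
   [\sum_(p in P) c_p].  Distinct runs are separated by a deleted column, which keeps
   their rows and their columns apart. *)

Local Open Scope fset_scope.
Local Open Scope nat_scope.

Lemma in_fset_sep (T : choiceType) (A : {fset T}) (p : pred T) x :
  (x \in [fset y in A | p y]) = (x \in A) && p x.
Proof. by rewrite in_fset inE. Qed.

Lemma card_fsetU_disjoint (T : choiceType) (A B : {fset T}) :
  [disjoint A & B] -> #|` A `|` B| = #|` A| + #|` B|.
Proof. by move=> /disjoint_fsetI0 AB; rewrite -cardfsUI AB cardfs0 addn0. Qed.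

Lemma sort_undup_map_iota (T : choiceType) (f : T -> nat) (S : {fset T}) m p :
  (forall y, y \in S -> m <= f y < m + p) ->
  (forall i, m <= i < m + p -> exists2 y, y \in S & f y = i) ->
  sort leq (undup [seq f y | y <- enum_fset S]) = iota m p.
Proof.
move=> f_range f_onto.
apply: (@sorted_eq _ leq leq_trans anti_leq);
  [exact: sort_sorted leq_total _ | exact: iota_sorted |].
rewrite perm_sort; apply: uniq_perm; [exact: undup_uniq | exact: iota_uniq |].
move=> i; rewrite mem_undup mem_iota; apply/mapP/idP => [[y yS ->]|hi]; first exact: f_range.
by have [y yS <-] := f_onto i hi; exists y.
Qed.

Lemma count_range_uniq (s : seq nat) m d : uniq s -> count (fun a => m <= a < m + d) s <= d.
Proof.
move=> s_uniq; rewrite -size_filter -[X in _ <= X](size_iota m d).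
apply: uniq_leq_size; first exact: filter_uniq.
by move=> x; rewrite mem_filter mem_iota => /andP[].
Qed.

Lemma count_lt_split (s : seq nat) j k : j <= k ->
  count (fun a => a < k) s = count (fun a => a < j) s + count (fun a => j <= a < k) s.
Proof. by move=> jk; elim: s => //= a s ->; lia. Qed.

Lemma count_lt_gt_eq (s : seq nat) j :
  count (fun a => a < j) s + count (fun a => j < a) s + count (pred1 j) s = size s.
Proof. by elim: s => //= a s <-; lia. Qed.

Lemma mem_grid_pairs n (x : nat * nat) :
  (x \in [seq (i, j) | i <- iota 1 n, j <- iota 1 n]) = (1 <= x.1 <= n) && (1 <= x.2 <= n).
Proof.
case: x => i j /=; apply/allpairsP/idP => [[[a b] /= [ha hb [-> ->]]]|h].
  by move: ha hb; rewrite !mem_iota; lia.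
by exists (i, j); rewrite /= !mem_iota; split => //; lia.
Qed.

Lemma mem_grid n x : (x \in grid n) = (1 <= x.1 <= n) && (1 <= x.2 <= n).
Proof. by rewrite in_fset /= mem_grid_pairs. Qed.

Lemma menage_complE n x : (x \in menage_compl n) = (x \in grid n) && (x \notin menage_board n).
Proof. exact: in_fset_sep. Qed.

Lemma eq_modn_succ_small n i j : 2 <= n -> 1 <= i <= n -> 1 <= j <= n ->
  ((j + 1) %% n == i %% n) = (i == j.+1) || (i == 1) && (j == n).
Proof.
move=> n_ge2 hi hj.
have -> : i %% n = if i == n then 0 else i.
  by case: eqP => [->|ne]; [rewrite modnn | rewrite modn_small //; lia].
have -> : (j + 1) %% n = if j.+1 == n then 0 else if j == n then 1 else j.+1.
  case: eqP => [<-|ne1]; first by rewrite addn1 modnn.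
  case: eqP => [->|ne2]; first by rewrite modnDl modn_small //; lia.
  by rewrite modn_small //; lia.
by do !case: ifP; lia.
Qed.

Lemma mem_menage_compl n x : 2 <= n ->
  (x \in menage_compl n) = [&& 1 <= x.1 <= n, 1 <= x.2 <= n &
     (x.1 == x.2) || (x.1 == x.2.+1) || (x.1 == 1) && (x.2 == n)].
Proof.
move=> n_ge2; rewrite /menage_compl /menage_board !in_fset !inE /= !mem_grid_pairs.
case: x => i j /=; case hi: (1 <= i <= n); case hj: (1 <= j <= n) => //=.
by rewrite negb_and !negbK eq_modn_succ_small //; lia.
Qed.

Lemma valid_prefix_uniq {n alpha} : valid_prefix n alpha -> uniq alpha.
Proof.
by case=> s [[s_perm _] ->]; apply: take_uniq; rewrite (perm_uniq s_perm) iota_uniq.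
Qed.

Lemma valid_prefix_range {n alpha} : valid_prefix n alpha -> forall a, a \in alpha -> 1 <= a <= n.
Proof. by case=> s [[s_perm _] ->] a /mem_take; rewrite (perm_mem s_perm) mem_iota; lia. Qed.





Definition segment (a b : nat) : {fset nat} := [fset i in iota a (b.+1 - a)].

Lemma mem_segment a b i : (i \in segment a b) = (a <= i <= b).
Proof. by rewrite in_fset /= mem_iota; lia. Qed.

Lemma consecutive_segment a b : consecutive (segment a b).
Proof. by move=> x y z; rewrite !mem_segment; lia. Qed.

Lemma segment_sub_consecutive {P : {fset nat}} {x y : nat} :
  consecutive P -> x \in P -> y \in P -> segment x y `<=` P.
Proof. by move=> P_cons xP yP; apply/fsubsetP => z; rewrite mem_segment; apply: P_cons. Qed.

Lemma consecutiveU {P Q : {fset nat}} {i j : nat} : consecutive P -> consecutive Q ->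
  i \in P -> j \in Q -> j <= i.+1 -> i <= j.+1 -> consecutive (P `|` Q).
Proof.
move=> P_cons Q_cons iP jQ ji ij x y z; rewrite !in_fsetU.
case/orP=> [xP|xQ] /orP[yP|yQ] hz.
- by rewrite (P_cons x y z).
- case: (leqP z i) => zi; first by rewrite (P_cons x i z) //; lia.
  by rewrite (Q_cons j y z) ?orbT //; lia.
- case: (leqP z j) => zj; first by rewrite (Q_cons x j z) ?orbT //; lia.
  by rewrite (P_cons i y z) //; lia.
- by rewrite (Q_cons x y z) ?orbT.
Qed.

Lemma mem_free_cols n alpha i : (i \in free_cols n alpha) = (1 <= i <= n) && (i \notin alpha).
Proof. by rewrite in_fset !inE mem_iota. Qed.

(* Two blocks that meet or touch have a consecutive union, so by maximality they coincide. *)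
Lemma block_gap {n alpha P Q i j} : is_block n alpha P -> is_block n alpha Q -> P != Q ->
  i \in P -> j \in Q -> (i.+1 < j) || (j.+1 < i).
Proof.
move=> [_ P_free P_cons P_max] [_ Q_free Q_cons Q_max] PQ iP jQ.
case: (ltnP i.+1 j) => //= ji; case: (ltnP j.+1 i) => //= ij.
have PQ_cons := consecutiveU P_cons Q_cons iP jQ ji ij.
have PQ_free : P `|` Q `<=` free_cols n alpha by rewrite fsubUset P_free Q_free.
have eP := P_max _ PQ_cons (fsubsetUl P Q) PQ_free.
have eQ := Q_max _ PQ_cons (fsubsetUr P Q) PQ_free.
by rewrite -eP eQ eqxx in PQ.
Qed.

Lemma mem_block_free {n alpha P j} : is_block n alpha P -> j \in P -> j \in free_cols n alpha.
Proof. by case=> _ P_free _ _ /(fsubsetP P_free). Qed.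

Lemma block_segment {n alpha P} : is_block n alpha P -> exists a b, P = segment a b.
Proof.
move=> [/fset0Pn P_ne P_free P_cons _].
have exP : exists i, (fun i => i \in P) i by [].
have ubP i : i \in P -> i <= n by move/(fsubsetP P_free); rewrite mem_free_cols; lia.
case: (ex_minnP exP) => a aP a_min; case: (ex_maxnP exP ubP) => b bP b_max.
exists a, b; apply/fsetP => i; rewrite mem_segment.
by apply/idP/idP => [iP|/(P_cons a b i aP bP)//]; rewrite a_min ?b_max.
Qed.

Lemma exists_block {n alpha j} : j \in free_cols n alpha -> exists2 P, is_block n alpha P & j \in P.
Proof.
move=> j_free; have j_range : 1 <= j <= n by move: j_free; rewrite mem_free_cols => /andP[].
have seg_jj : segment j j `<=` free_cols n alpha.
  by apply/fsubsetP => i; rewrite mem_segment => hi; have -> : i = j by lia.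
have ex_a : exists a, (0 < a) && (segment a j `<=` free_cols n alpha).
  by exists j; rewrite seg_jj andbT; lia.
have ex_b : exists b, (b <= n) && (segment j b `<=` free_cols n alpha).
  by exists j; rewrite seg_jj andbT; lia.
have ub_b b : (b <= n) && (segment j b `<=` free_cols n alpha) -> b <= n by case/andP.
case: (ex_minnP ex_a) => a /andP[a_pos a_free] a_min.
case: (ex_maxnP ex_b ub_b) => b /andP[b_le b_free] b_max.
have aj : a <= j by apply: a_min; rewrite seg_jj andbT; lia.
have jb : j <= b by apply: b_max; rewrite seg_jj andbT; lia.
exists (segment a b); last by rewrite mem_segment; lia.
split.
- by apply/fset0Pn; exists j; rewrite mem_segment; lia.
- apply/fsubsetP => i; rewrite mem_segment => hi.
  by case: (leqP i j) => ij; [apply: (fsubsetP a_free) | apply: (fsubsetP b_free)];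
    rewrite mem_segment; lia.
- exact: consecutive_segment.
move=> Q Q_cons sub_Q Q_free; apply/eqP; rewrite eqEfsubset sub_Q andbT.
have jQ : j \in Q by apply: (fsubsetP sub_Q); rewrite mem_segment; lia.
apply/fsubsetP => i iQ; rewrite mem_segment.
have /andP[i_range _] : (1 <= i <= n) && (i \notin alpha).
  by rewrite -mem_free_cols (fsubsetP Q_free).
have ai : a <= i.
  by apply: a_min; rewrite (fsubset_trans (segment_sub_consecutive Q_cons iQ jQ)) //; lia.
have ib : i <= b.
  by apply: b_max; rewrite (fsubset_trans (segment_sub_consecutive Q_cons jQ iQ)) //; lia.
by rewrite ai ib.
Qed.


Definition shift (r c : nat) (u : nat * nat) := (u.1 + r, u.2 + c).

Lemma mem_shift (U : board) r c y :
  (y \in shift r c @` U) = [&& r <= y.1, c <= y.2 & (y.1 - r, y.2 - c) \in U].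
Proof.
apply/imfsetP/idP => [[u /= uU ->]|/and3P[ry cy yU]].
  by rewrite /shift /= !leq_addl !addnK -surjective_pairing uU.
by exists (y.1 - r, y.2 - c) => //; rewrite /shift /= !subnK //; case: y {yU} ry cy.
Qed.

Lemma card_shift (U : board) r c : #|` shift r c @` U| = #|` U|.
Proof. by rewrite card_imfset // => -[x1 x2] [y1 y2] [] /= e1 e2; congr pair; lia. Qed.

Lemma normalize_shift (U : board) r c p q :
  (forall u, u \in U -> (1 <= u.1 <= p) && (1 <= u.2 <= q)) ->
  (forall i, 1 <= i <= p -> exists j, (i, j) \in U) ->
  (forall j, 1 <= j <= q -> exists i, (i, j) \in U) ->
  normalize (shift r c @` U) = U.
Proof.
move=> U_range rows_occ cols_occ; rewrite /normalize; set S := shift r c @` U.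
have S_range y : y \in S -> (r < y.1 <= r + p) && (c < y.2 <= c + q).
  by rewrite mem_shift => /and3P[ry cy /U_range] /=; lia.
have -> : occ_rows S = iota r.+1 p.
  apply: sort_undup_map_iota => [y /S_range|i hi]; first lia.
  have [j ij] := rows_occ (i - r) ltac:(lia).
  by exists (i, j + c); rewrite // mem_shift /= addnK ij andbT; lia.
have -> : occ_cols S = iota c.+1 q.
  apply: sort_undup_map_iota => [y /S_range|j hj]; first lia.
  have [i ij] := cols_occ (j - c) ltac:(lia).
  by exists (i + r, j); rewrite // mem_shift /= addnK ij; lia.
rewrite /S -imfset_comp -[RHS]imfset_id; apply: eq_in_imfset => -[u1 u2] /U_range /= hu.
have index_iota i m k : 1 <= i <= k -> index (i + m) (iota m.+1 k) = i.-1.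
  move=> hi; have -> : i + m = nth 0 (iota m.+1 k) i.-1 by rewrite nth_iota; lia.
  by rewrite index_uniq ?iota_uniq ?size_iota //; lia.
by rewrite /shift /= !index_iota; [congr pair; lia | lia | lia].
Qed.

Lemma mem_diag_sq k x : (x \in diag_sq k) = (x.1 == x.2) && (1 <= x.1 <= k).
Proof.
apply/imfsetP/idP => [[i /= ik ->]|/andP[/eqP e xk]] /=; first by move: ik; rewrite mem_iota; lia.
by exists x.1; [rewrite mem_iota; lia | case: x e {xk} => a b /= ->].
Qed.

Lemma mem_upper_sq k x : (x \in upper_sq k) = (x.2 == x.1.+1) && (1 <= x.1 <= k).
Proof.
apply/imfsetP/idP => [[i /= ik ->]|/andP[/eqP e xk]] /=; first by move: ik; rewrite mem_iota; lia.
by exists x.1; [rewrite mem_iota; lia | case: x e {xk} => a b /= ->].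
Qed.

Lemma mem_lower_sq k x : (x \in lower_sq k) = (x.1 == x.2.+1) && (1 <= x.2 <= k).
Proof.
apply/imfsetP/idP => [[i /= ik ->]|/andP[/eqP e xk]] /=; first by move: ik; rewrite mem_iota; lia.
by exists x.2; [rewrite mem_iota; lia | case: x e {xk} => a b /= ->].
Qed.

Definition mem_shapeE := (in_fsetU, mem_diag_sq, mem_upper_sq, mem_lower_sq).

Lemma card_diag_sq k : #|` diag_sq k| = k.
Proof. by rewrite card_imfset /= ?undup_id ?iota_uniq ?size_iota // => i j []. Qed.

Lemma card_upper_sq k : #|` upper_sq k| = k.
Proof. by rewrite card_imfset /= ?undup_id ?iota_uniq ?size_iota // => i j []. Qed.

Lemma card_lower_sq k : #|` lower_sq k| = k.
Proof. by rewrite card_imfset /= ?undup_id ?iota_uniq ?size_iota // => i j []. Qed.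

Lemma card_shape_O m : #|` shape_O m| = m + m.-1.
Proof.
rewrite card_fsetU_disjoint ?card_diag_sq ?card_upper_sq //.
by apply/fdisjointP => x; rewrite !mem_shapeE; lia.
Qed.

Lemma card_shape_OT m : #|` shape_OT m| = m + m.-1.
Proof.
rewrite card_fsetU_disjoint ?card_diag_sq ?card_lower_sq //.
by apply/fdisjointP => x; rewrite !mem_shapeE; lia.
Qed.

Lemma card_shape_E m : #|` shape_E m| = m.-1 + m.-1.
Proof.
rewrite card_fsetU_disjoint ?card_diag_sq ?card_lower_sq //.
by apply/fdisjointP => x; rewrite !mem_shapeE; lia.
Qed.

Lemma card_shape_ET m : #|` shape_ET m| = m.-1 + m.-1.
Proof.
rewrite card_fsetU_disjoint ?card_diag_sq ?card_upper_sq //.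
by apply/fdisjointP => x; rewrite !mem_shapeE; lia.
Qed.

Definition staircase (U : board) : Prop :=
  exists2 m, 0 < m & [\/ U = shape_O m, U = shape_OT m, U = shape_E m | U = shape_ET m].

Lemma normalize_shift_staircase (U : board) r c :
  staircase U -> normalize (shift r c @` U) = U.
Proof.
case=> m m_pos [] ->.
1,2: by apply: (@normalize_shift _ r c m m) => [u|i hi|j hj]; [|exists i|exists j];
  rewrite !mem_shapeE /=; lia.
all: have [->|m_ne1] := eqVneq m 1;
  first by apply: (@normalize_shift _ r c 0 0) => [u|i|j]; rewrite ?mem_shapeE; lia.
- apply: (@normalize_shift _ r c m m.-1) => [u|i hi|j hj]; first by rewrite !mem_shapeE; lia.
  + by case: (ltnP i m) => im; [exists i | exists i.-1]; rewrite !mem_shapeE /=; lia.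
  + by exists j; rewrite !mem_shapeE /=; lia.
- apply: (@normalize_shift _ r c m.-1 m) => [u|i hi|j hj]; first by rewrite !mem_shapeE; lia.
  + by exists i; rewrite !mem_shapeE /=; lia.
  + by case: (ltnP j m) => jm; [exists j | exists j.-1]; rewrite !mem_shapeE /=; lia.
Qed.

Lemma staircase_shaped_shift (U : board) r c : staircase U -> staircase_shaped (shift r c @` U).
Proof.
move=> U_stair; rewrite /staircase_shaped normalize_shift_staircase //.
by case: U_stair => m m_pos [] ->; exists m; split; tauto.
Qed.

Definition colrank (alpha : seq nat) j := j - count (fun a => a < j) alpha.

Lemma relabE alpha x : relab alpha x = (x.1 - size alpha, colrank alpha x.2).
Proof. by []. Qed.

Definition cw_prefix (n l x : nat) :=
  if x < l then 0 else if x < n then 2 * (x - l) + 1 else 2 * (n - l).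

Section RelabeledBoards.
Variables (n : nat) (alpha : seq nat).
Hypothesis alpha_uniq : uniq alpha.
Hypothesis alpha_range : forall a, a \in alpha -> 1 <= a <= n.
Hypothesis alpha_size : 0 < size alpha < n.

Lemma count_lt_le j : count (fun a => a < j) alpha <= j.-1.
Proof.
rewrite (@eq_in_count _ _ (fun a => 1 <= a < 1 + j.-1)); first exact: count_range_uniq.
by move=> a /alpha_range; lia.
Qed.

Lemma count_gt_le j : count (fun a => j < a) alpha <= n - j.
Proof.
rewrite (@eq_in_count _ _ (fun a => j.+1 <= a < j.+1 + (n - j))); first exact: count_range_uniq.
by move=> a /alpha_range; lia.
Qed.

Lemma colrank_range {j : nat} : 1 <= j <= n -> j \notin alpha ->
  1 <= colrank alpha j <= n - size alpha.
Proof.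
move=> hj /count_memPn j_notin; rewrite /colrank.
by have := count_lt_gt_eq alpha j; have := count_lt_le j; have := count_gt_le j; lia.
Qed.

Lemma colrank_mono {j k : nat} : j < k -> j \notin alpha -> colrank alpha j < colrank alpha k.
Proof.
move=> jk j_notin; rewrite /colrank (@count_lt_split alpha j k (ltnW jk)).
have -> : count (fun a => j <= a < k) alpha = count (fun a => j.+1 <= a < j.+1 + (k - j.+1)) alpha.
  apply: eq_in_count => a a_in /=; have : a != j by apply: contraNneq j_notin => <-.
  lia.
by have := count_range_uniq alpha j.+1 (k - j.+1) alpha_uniq; have := count_lt_le j; lia.
Qed.

Lemma colrank_inj {j k : nat} : j \notin alpha -> k \notin alpha ->
  colrank alpha j = colrank alpha k -> j = k.
Proof.
move=> j_notin k_notin e; case: (ltngtP j k) => // [jk|kj].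
  by have := colrank_mono jk j_notin; rewrite e ltnn.
by have := colrank_mono kj k_notin; rewrite e ltnn.
Qed.

Lemma colrank_onto x : 1 <= x <= n - size alpha ->
  exists2 j, (1 <= j <= n) && (j \notin alpha) & colrank alpha j = x.
Proof.
move=> hx; set free := [seq i <- iota 1 n | i \notin alpha].
have free_size : size free = n - size alpha.
  have alpha_count : count (mem alpha) (iota 1 n) = size alpha.
    rewrite -size_filter; apply/perm_size/uniq_perm => // [|y].
      exact/filter_uniq/iota_uniq.
    rewrite mem_filter mem_iota andb_idr // => /alpha_range; lia.
  have := count_predC (mem alpha) (iota 1 n).
  by rewrite size_filter size_iota alpha_count => /(canRL (addKn _)).
have img_uniq : uniq (map (colrank alpha) free).
  rewrite map_inj_in_uniq; first exact/filter_uniq/iota_uniq.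
  by move=> j k; rewrite !mem_filter => /andP[j_notin _] /andP[k_notin _]; apply: colrank_inj.
have img_sub : {subset map (colrank alpha) free <= iota 1 (n - size alpha)}.
  move=> y /mapP[j]; rewrite mem_filter mem_iota => /andP[j_notin hj] ->.
  by rewrite mem_iota; have := @colrank_range j ltac:(lia) j_notin; lia.
have [_ img_eq] := uniq_min_size img_uniq img_sub ltac:(by rewrite size_map free_size size_iota).
have : x \in iota 1 (n - size alpha) by rewrite mem_iota; lia.
rewrite -img_eq => /mapP[j]; rewrite mem_filter mem_iota => /andP[j_notin hj] ->.
by exists j; rewrite ?j_notin; first lia.
Qed.

Lemma count_lt_segment {a b j : nat} : segment a b `<=` free_cols n alpha -> a <= j <= b ->
  count (fun x => x < j) alpha = count (fun x => x < a) alpha.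
Proof.
move=> seg_free hj; rewrite (@count_lt_split alpha a j) ?(andP hj).1 //.
suff -> : count (fun x => a <= x < j) alpha = 0 by rewrite addn0.
apply/eqP; rewrite -leqn0 leqNgt -has_count; apply/hasPn => x x_in; apply/negP => hx.
have /(fsubsetP seg_free) : x \in segment a b by rewrite mem_segment; lia.
by rewrite mem_free_cols x_in andbF.
Qed.

Lemma mem_sub_board_segment a b y : segment a b `<=` free_cols n alpha ->
  (y \in sub_board n alpha (segment a b)) =
  [&& 0 < y.1, a <= y.2 + count (fun x => x < a) alpha <= b &
      (y.1 + size alpha, y.2 + count (fun x => x < a) alpha) \in menage_compl n].
Proof.
move=> seg_free; have k_le := count_lt_le a; case: y => y1 y2 /=.
apply/imfsetP/idP => [[[x1 x2]]|/and3P[y1_pos y_seg yBc]].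
  rewrite in_fset_sep mem_segment /= => /and3P[xBc lx x_seg] [-> ->].
  rewrite (count_lt_segment seg_free x_seg).
  have -> : x1 - size alpha + size alpha = x1 by lia.
  have -> : x2 - count (fun x => x < a) alpha + count (fun x => x < a) alpha = x2 by lia.
  by rewrite xBc x_seg andbT; lia.
exists (y1 + size alpha, y2 + count (fun x => x < a) alpha).
  by rewrite in_fset_sep /= mem_segment yBc y_seg andbT /=; lia.
by rewrite /= relabE /colrank /= (count_lt_segment seg_free y_seg) !addnK.
Qed.

Lemma sum_cw_prefix x : x <= n -> \sum_(1 <= i < x.+1) cw n alpha i = cw_prefix n (size alpha) x.
Proof.
rewrite /cw_prefix; elim: x => [|x IH] x_le; first by rewrite big_geq //; case: ifP; lia.
by rewrite big_nat_recr //= IH; [rewrite /cw; do !case: ifP; lia | lia].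
Qed.

Lemma sum_cw_segment {a b : nat} : 0 < a <= b -> b <= n ->
  \sum_(a <= i < b.+1) cw n alpha i = cw_prefix n (size alpha) b - cw_prefix n (size alpha) a.-1.
Proof.
move=> ab b_le; rewrite -!sum_cw_prefix ?prednK; try lia.
by rewrite (@big_cat_nat _ _ _ a 1) ?addKn //; lia.
Qed.

Lemma sub_board_segment_staircase {a b : nat} : a <= b -> segment a b `<=` free_cols n alpha ->
  exists U r c, [/\ staircase U, sub_board n alpha (segment a b) = shift r c @` U &
                    #|` U| = \sum_(a <= i < b.+1) cw n alpha i].
Proof.
move=> ab seg_free; have n_ge2 : 2 <= n by lia.
have /andP[a_pos b_le] : (0 < a) && (b <= n).
  have := fsubsetP seg_free a; have := fsubsetP seg_free b.
  by rewrite !mem_segment !mem_free_cols => /(_ ltac:(lia)) + /(_ ltac:(lia)); lia.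
have := @sum_cw_segment a b ltac:(lia) b_le; rewrite /cw_prefix => ->.
have k_le := count_lt_le a; set k := count (fun x => x < a) alpha in k_le.
have shiftE (U : board) r c :
    (forall y, [&& 0 < y.1, a <= y.2 + k <= b & (y.1 + size alpha, y.2 + k) \in menage_compl n] =
               [&& r <= y.1, c <= y.2 & (y.1 - r, y.2 - c) \in U]) ->
    sub_board n alpha (segment a b) = shift r c @` U.
  by move=> memU; apply/fsetP => y; rewrite mem_sub_board_segment // mem_shift; exact: memU.
have [b_lt|l_le_b] := ltnP b (size alpha).
  exists (shape_E 1), 0, 0; split; first by exists 1 => //; apply: Or43.
    by apply: shiftE => y; rewrite (mem_menage_compl _ _ n_ge2) !mem_shapeE /=; lia.
  by rewrite card_shape_E; do !case: ifP; lia.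
have [a_le|a_gt] := leqP a (size alpha); have [b_lt|b_ge] := ltnP b n.
- exists (shape_O (b - size alpha).+1), 0, ((size alpha).-1 - k).
  split; first by exists (b - size alpha).+1 => //; apply: Or41.
    by apply: shiftE => y; rewrite (mem_menage_compl _ _ n_ge2) !mem_shapeE /=; lia.
  by rewrite card_shape_O; do !case: ifP; lia.
- exists (shape_ET (n - size alpha).+1), 0, ((size alpha).-1 - k).
  split; first by exists (n - size alpha).+1 => //; apply: Or44.
    by apply: shiftE => y; rewrite (mem_menage_compl _ _ n_ge2) !mem_shapeE /=; lia.
  by rewrite card_shape_ET; do !case: ifP; lia.
- exists (shape_E (b - a).+2), (a.-1 - size alpha), (a.-1 - k).
  split; first by exists (b - a).+2 => //; apply: Or43.
    by apply: shiftE => y; rewrite (mem_menage_compl _ _ n_ge2) !mem_shapeE /=; lia.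
  by rewrite card_shape_E; do !case: ifP; lia.
- exists (shape_OT (n - a).+1), (a.-1 - size alpha), (a.-1 - k).
  split; first by exists (n - a).+1 => //; apply: Or42.
    by apply: shiftE => y; rewrite (mem_menage_compl _ _ n_ge2) !mem_shapeE /=; lia.
  by rewrite card_shape_OT; do !case: ifP; lia.
Qed.

Lemma sub_board_block P : is_block n alpha P ->
  staircase_shaped (sub_board n alpha P) /\
  #|` sub_board n alpha P| = \sum_(p <- enum_fset P) cw n alpha p.
Proof.
move=> P_block; have [a [b P_seg]] := block_segment P_block.
case: P_block; rewrite P_seg => /fset0Pn[j j_seg] seg_free _ _.
have ab : a <= b by move: j_seg; rewrite mem_segment; lia.
have [U [r [c [U_stair -> U_card]]]] := sub_board_segment_staircase ab seg_free.
split; first exact: staircase_shaped_shift.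
rewrite card_shift U_card [RHS](perm_big (index_iota a b.+1)) //.
by apply: uniq_perm => [||i]; rewrite ?fset_uniq ?iota_uniq // mem_index_iota mem_segment.
Qed.

Lemma relab_inj_free x y : size alpha < x.1 -> size alpha < y.1 ->
  x.2 \notin alpha -> y.2 \notin alpha -> relab alpha x = relab alpha y -> x = y.
Proof.
case: x y => [x1 x2] [y1 y2] /= lx ly x_free y_free [e1 /(colrank_inj x_free y_free) ->].
by congr pair; lia.
Qed.

Lemma derived_compl_relab : derived_compl n alpha =
  relab alpha @` [fset x in menage_compl n | (size alpha < x.1) && (x.2 \notin alpha)].
Proof.
apply/fsetP => -[y1 y2]; rewrite in_fset_sep mem_grid /=.
apply/andP/imfsetP => [[y_grid y_notin]|[[x1 x2]]].
  have [j /andP[j_range j_free] j_rank] := colrank_onto y2 ltac:(lia).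
  have j_notB : (y1 + size alpha, j) \notin menage_board n.
    apply/negP => jB; case/negP: y_notin; apply/imfsetP; exists (y1 + size alpha, j).
      by rewrite in_fset_sep jB j_free /= andbT; lia.
    by rewrite relabE /= addnK j_rank.
  exists (y1 + size alpha, j); last by rewrite relabE /= addnK j_rank.
  by rewrite in_fset_sep menage_complE mem_grid /= j_range j_free j_notB !andbT; lia.
rewrite in_fset_sep menage_complE mem_grid /=.
move=> /andP[/andP[/andP[x1_range x2_range] xB] /andP[lx x_free]] [-> ->].
split; first by have := colrank_range x2_range x_free; rewrite /colrank; lia.
apply/negP => /imfsetP[[z1 z2]]; rewrite in_fset_sep /= => /andP[zB /andP[lz z_free]] e.
have xz : (x1, x2) = (z1, z2) by exact: relab_inj_free.
by move: zB; rewrite -xz (negbTE xB).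
Qed.

Lemma derived_compl_blocks (Ps : seq {fset nat}) : (forall P, P \in Ps <-> is_block n alpha P) ->
  derived_compl n alpha = \bigcup_(P <- Ps) sub_board n alpha P.
Proof.
move=> Ps_blocks; rewrite derived_compl_relab; apply/fsetP => y.
apply/imfsetP/bigfcupP => [[x]|[P /andP[/Ps_blocks P_block _]]].
  rewrite in_fset_sep => /andP[xBc /andP[lx x_free]] ->.
  have : x.2 \in free_cols n alpha.
    by move: xBc; rewrite menage_complE mem_grid mem_free_cols x_free andbT; lia.
  case/exists_block => P P_block xP; exists P; first by rewrite andbT; apply/Ps_blocks.
  by apply/imfsetP; exists x; rewrite // in_fset_sep xBc lx xP.
move=> /imfsetP[x]; rewrite in_fset_sep => /andP[xBc /andP[lx xP]] ->.
have := mem_block_free P_block xP; rewrite mem_free_cols => /andP[_ x_free].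
by exists x; rewrite // in_fset_sep xBc lx.
Qed.

(* A square of [B^c] below row [l] lies on the diagonal or just below it, so squares in
   columns at distance at least two share no row. *)
Lemma relab_separated {x y : nat * nat} : x \in menage_compl n -> y \in menage_compl n ->
  size alpha < x.1 -> size alpha < y.1 -> x.2 \notin alpha -> x.2.+1 < y.2 ->
  (relab alpha x).1 != (relab alpha y).1 /\ (relab alpha x).2 != (relab alpha y).2.
Proof.
have n_ge2 : 2 <= n by lia.
case: x y => [x1 x2] [y1 y2]; rewrite !(mem_menage_compl _ _ n_ge2) /= => xBc yBc lx ly x_free gap.
by have := colrank_mono (ltnW gap) x_free; rewrite /colrank; split; lia.
Qed.

Lemma sub_board_blocks_disjoint P Q : is_block n alpha P -> is_block n alpha Q -> P != Q ->
  disjoint_boards (sub_board n alpha P) (sub_board n alpha Q).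
Proof.
move=> P_block Q_block PQ _ _ /imfsetP[x + ->] /imfsetP[y + ->].
rewrite in_fset_sep => /andP[xBc /andP[lx xP]]; rewrite in_fset_sep => /andP[yBc /andP[ly yQ]].
have := mem_block_free P_block xP; have := mem_block_free Q_block yQ.
rewrite !mem_free_cols => /andP[_ y_free] /andP[_ x_free].
case/orP: (block_gap P_block Q_block PQ xP yQ) => gap; first exact: relab_separated.
by have [] := relab_separated yBc xBc ly lx y_free gap; split; rewrite eq_sym.
Qed.

End RelabeledBoards.

Theorem mainTheorem9 (n : nat) (alpha : seq nat) (Ps : seq {fset nat}) :
  3 <= n ->
  valid_prefix n alpha ->
  1 <= size alpha < n ->
  uniq Ps ->
  (forall P, P \in Ps <-> is_block n alpha P) ->
  [/\ derived_compl n alpha = \bigcup_(P <- Ps) sub_board n alpha P,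
      (forall P Q, P \in Ps -> Q \in Ps -> P != Q ->
         disjoint_boards (sub_board n alpha P) (sub_board n alpha Q)),
      (forall P, P \in Ps ->
         staircase_shaped (sub_board n alpha P) /\
         #|` sub_board n alpha P| = \sum_(p <- enum_fset P) cw n alpha p) &
      perm_eq [seq #|` sub_board n alpha P| | P <- Ps]
              [seq \sum_(p <- enum_fset P) cw n alpha p | P <- Ps]].
Proof.
move=> _ alpha_valid alpha_size _ Ps_blocks.
have alpha_uniq := valid_prefix_uniq alpha_valid.
have alpha_range := valid_prefix_range alpha_valid.
split.
- exact: derived_compl_blocks.
- by move=> P Q /Ps_blocks P_block /Ps_blocks Q_block; apply: sub_board_blocks_disjoint.
- by move=> P /Ps_blocks; apply: sub_board_block.
suff -> : [seq #|` sub_board n alpha P| | P <- Ps] =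
          [seq \sum_(p <- enum_fset P) cw n alpha p | P <- Ps] by [].
by apply/eq_in_map => P /Ps_blocks /sub_board_block [].
Qed.
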